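(* Let $g:\mathbb{R}^N\to\mathbb{R}\cup\{+\infty\}$ be proper and lower semi-continuous, and let $f:\mathbb{R}^N\to\mathbb{R}$ be continuously differentiable such that, for some $\mathbf{L}\in\mathbb{S}_{++}(N)$, the gradient of $f\circ\mathbf{L}^{-1/2}$ is $1$-Lipschitz continuous; assume $f+g$ is bounded from below. Suppose moreover that $f(x)=\frac12\langle x,\mathbf{H}x\rangle+\langle b,x\rangle+c$ with $\mathbf{H}\in\mathbb{S}_{++}(N)$, $b\in\mathbb{R}^N$, $c\in\mathbb{R}$. Let $x_k\in\mathbb{R}^N$, let $\mathbf{D}\in\mathbb{R}^{N\times R}$ have linearly independent columns, and for $\boldsymbol\beta\in\mathbb{R}^R$ put $y^{(\boldsymbol\beta)}:=x_k+\mathbf{D}\boldsymbol\beta$. Let $\mathbf{T}\in\mathbb{S}_{++}(N)$ be such that $\mathbf{M}:=\mathbf{T}-\mathbf{H}\in\mathbb{S}_{++}(N)$, and consider the problem $$\min_{x\in\mathbb{R}^N}\min_{\boldsymbol\beta\in\mathbb{R}^R}\ \ell(x;y^{(\boldsymbol\beta)})+\tfrac12\|x-y^{(\boldsymbol\beta)}\|_{\mathbf{T}}^2,\qquad \ell(x;y):=g(x)+f(y)+\langle\nabla f(y),x-y\rangle. \quad (\ast)$$ Then, for each fixed $x$, the inner minimization over $\boldsymbol\beta$ is solved by $$\boldsymbol\beta^*=(\mathbf{D}^\top\mathbf{M}\mathbf{D})^{-1}\mathbf{D}^\top\mathbf{M}(x-x_k).$$ Moreover, problem $(\ast)$ is equivalent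 to $$x_{k+1}\in\operatorname*{argmin}_{x\in\mathbb{R}^N}\ g(x)+\tfrac12\big\|x-x_k+\mathbf{Q}^{-1}\nabla f(x_k)\big\|_{\mathbf{Q}}^2,$$ (i.e. the $x$-components of minimizers of $(\ast)$ are exactly the minimizers of this problem), where $$\mathbf{Q}:=\mathbf{T}-\mathbf{U}^\top\mathbf{U}\in\mathbb{S}_{++}(N),\qquad \mathbf{U}:=(\mathbf{D}^\top\mathbf{M}\mathbf{D})^{-1/2}\mathbf{D}^\top\mathbf{M},$$ $\mathbf{U}^\top\mathbf{U}$ has rank $R$, and $$\mathbf{Q}^{-1}=\mathbf{T}^{-1}+\mathbf{T}^{-1}\mathbf{U}^\top(\mathbf{I}-\mathbf{U}\mathbf{T}^{-1}\mathbf{U}^\top)^{-1}\mathbf{U}\mathbf{T}^{-1}.$$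
   Context: $\mathbb{S}_{+}(N)$ (resp. $\mathbb{S}_{++}(N)$) denotes the set of symmetric positive semi-definite (resp. positive definite) $N\times N$ real matrices. For a matrix $\mathbf{V}$, $\|x\|_{\mathbf{V}}^2:=\langle x,\mathbf{V}x\rangle$ and $\langle x,y\rangle_{\mathbf{V}}:=\langle x,\mathbf{V}y\rangle$, with $\langle\cdot,\cdot\rangle$ the standard Euclidean inner product. $\mathbf{I}$ is the identity matrix. *)

From HB Require Import structures.
From mathcomp Require Import all_boot all_order all_algebra.
From mathcomp Require Import constructive_ereal reals.
From Stdlib Require Import ClassicalEpsilon.
Set Implicit Arguments. Unset Strict Implicit. Unset Printing Implicit Defensive.
Import Order.TTheory GRing.Theory Num.Theory.
Local Open Scope ring_scope.

Section Defs.
Variable R : realType.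

Definition ip (n : nat) (x y : 'cV[R]_n) : R := (x^T *m y) 0 0.
Definition ipV (n : nat) (V : 'M[R]_n) (x y : 'cV[R]_n) : R := ip x (V *m y).
Definition sqnormV (n : nat) (V : 'M[R]_n) (x : 'cV[R]_n) : R := ipV V x x.
Definition enorm (n : nat) (x : 'cV[R]_n) : R := Num.sqrt (ip x x).

Definition psd (n : nat) (A : 'M[R]_n) : Prop :=
  A^T = A /\ forall x : 'cV[R]_n, 0 <= ip x (A *m x).
Definition spd (n : nat) (A : 'M[R]_n) : Prop :=
  A^T = A /\ forall x : 'cV[R]_n, x != 0 -> 0 < ip x (A *m x).

(* the (principal) square root A^{1/2}: the positive semi-definite S with
   S S = A (unique when A is positive semi-definite) *)
Definition sqrtmx (n : nat) (A : 'M[R]_n) : 'M[R]_n :=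
  epsilon (inhabits 0) (fun S : 'M[R]_n => psd S /\ S *m S = A).

Definition isqrtmx (n : nat) (A : 'M[R]_n) : 'M[R]_n := invmx (sqrtmx A).

Definition is_gradient (n : nat) (F : 'cV[R]_n -> R) (x v : 'cV[R]_n) : Prop :=
  forall eps : R, 0 < eps -> exists2 delta : R, 0 < delta &
    forall h : 'cV[R]_n, enorm h < delta ->
      `|F (x + h) - F x - ip v h| <= eps * enorm h.

Definition continuous_vf (n : nat) (G : 'cV[R]_n -> 'cV[R]_n) : Prop :=
  forall x eps, 0 < eps -> exists2 delta : R, 0 < delta &
    forall y, enorm (y - x) < delta -> enorm (G y - G x) < eps.

Definition C1_with_gradient (n : nat) (F : 'cV[R]_n -> R)
    (dF : 'cV[R]_n -> 'cV[R]_n) : Prop :=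
  (forall x, is_gradient F x (dF x)) /\ continuous_vf dF.

Definition lipschitz1 (n : nat) (G : 'cV[R]_n -> 'cV[R]_n) : Prop :=
  forall x y, enorm (G x - G y) <= enorm (x - y).

Definition proper_fun (n : nat) (g : 'cV[R]_n -> \bar R) : Prop :=
  (forall x, g x != -oo%E) /\ exists x, g x != +oo%E.

Definition lsc (n : nat) (g : 'cV[R]_n -> \bar R) : Prop :=
  forall x (a : R), (a%:E < g x)%E -> exists2 delta : R, 0 < delta &
    forall y, enorm (y - x) < delta -> (a%:E < g y)%E.

Definition is_argmin (T : Type) (h : T -> \bar R) (x : T) : Prop :=
  forall z, (h x <= h z)%E.

End Defs.

(* Because f is quadratic, its linearization at y plus (1/2)||x - y||_T^2 equals
   f(x) + (1/2)||x - y||_M^2 with M = T - H.  For fixed x the problem in beta is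
   therefore an M-weighted least-squares problem, solved by the normal equations,
   with optimal value g(x) + f(x) + (1/2)||x - x_k||^2_{M - U^T U}.  Expanding f around
   x_k and completing the square in x gives the stated problem, with
   Q = H + (M - U^T U), which is positive definite because M - U^T U is the form
   of the least-squares residual.  The formula for Q^{-1} is the Woodbury
   identity.  The one non-algebraic ingredient is the square root of the
   positive definite matrix D^T M D, obtained by repeatedly deflating a positive
   semi-definite matrix along an eigenvector of its largest eigenvalue, which is
   the supremum of the Rayleigh quotient. *)

From HB Require Import structures.
From mathcomp Require Import all_boot all_order all_algebra.
From mathcomp Require Import constructive_ereal reals.
From mathcomp Require Import ring lra classical_sets.
From Stdlib Require Import ClassicalEpsilon.
Set Implicit Arguments. Unset Strict Implicit. Unset Printing Implicit Defensive.
Import Order.TTheory GRing.Theory Num.Theory.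
Local Open Scope ring_scope.

Section InnerProduct.
Variable R : realType.
Implicit Types n : nat.

Lemma ipE n (x y : 'cV[R]_n) : ip x y = \sum_i x i 0 * y i 0.
Proof. by rewrite /ip mxE; apply: eq_bigr => i _; rewrite mxE. Qed.

Lemma ipC n (x y : 'cV[R]_n) : ip x y = ip y x.
Proof. by rewrite !ipE; apply: eq_bigr => i _; rewrite mulrC. Qed.

Lemma ipDr n (x y z : 'cV[R]_n) : ip x (y + z) = ip x y + ip x z.
Proof. by rewrite /ip mulmxDr mxE. Qed.

Lemma ipZr n a (x y : 'cV[R]_n) : ip x (a *: y) = a * ip x y.
Proof. by rewrite /ip -scalemxAr mxE. Qed.

Lemma ipNr n (x y : 'cV[R]_n) : ip x (- y) = - ip x y.
Proof. by rewrite -scaleN1r ipZr mulN1r. Qed.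

Lemma ipBr n (x y z : 'cV[R]_n) : ip x (y - z) = ip x y - ip x z.
Proof. by rewrite ipDr ipNr. Qed.

Lemma ipDl n (x y z : 'cV[R]_n) : ip (x + y) z = ip x z + ip y z.
Proof. by rewrite ipC ipDr !(ipC z). Qed.

Lemma ipZl n a (x y : 'cV[R]_n) : ip (a *: x) y = a * ip x y.
Proof. by rewrite ipC ipZr ipC. Qed.

Lemma ipBl n (x y z : 'cV[R]_n) : ip (x - y) z = ip x z - ip y z.
Proof. by rewrite ipC ipBr !(ipC z). Qed.

Lemma ip0r n (x : 'cV[R]_n) : ip x 0 = 0.
Proof. by rewrite /ip mulmx0 mxE. Qed.

Lemma ip0l n (x : 'cV[R]_n) : ip 0 x = 0.
Proof. by rewrite ipC ip0r. Qed.

Lemma ip_trmx m n (A : 'M[R]_(m, n)) x y : ip x (A *m y) = ip (A^T *m x) y.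
Proof. by rewrite /ip trmx_mul trmxK mulmxA. Qed.

Lemma ip_trmxl m n (A : 'M[R]_(m, n)) x y : ip (A *m x) y = ip x (A^T *m y).
Proof. by rewrite ip_trmx trmxK. Qed.

Lemma trmx_ip n (x y : 'cV[R]_n) : x^T *m y = (ip x y)%:M.
Proof. exact: mx11_scalar. Qed.

Lemma ip_ge0 n (x : 'cV[R]_n) : 0 <= ip x x.
Proof. by rewrite ipE sumr_ge0 // => i _; rewrite -expr2 sqr_ge0. Qed.

Lemma ip_eq0 n (x : 'cV[R]_n) : (ip x x == 0) = (x == 0).
Proof.
apply/idP/eqP => [|->]; last by rewrite ip0l.
rewrite ipE psumr_eq0 => [/allP x0|i _]; last by rewrite -expr2 sqr_ge0.
apply/matrixP => i j; rewrite (ord1 j) mxE.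
by have := x0 i (mem_index_enum _); rewrite -expr2 sqrf_eq0 => /eqP.
Qed.

Lemma ip_gt0 n (x : 'cV[R]_n) : x != 0 -> 0 < ip x x.
Proof. by move=> x0; rewrite lt_def ip_eq0 x0 ip_ge0. Qed.

Lemma enorm_ge0 n (x : 'cV[R]_n) : 0 <= enorm x.
Proof. exact: sqrtr_ge0. Qed.

Lemma enorm_gt0 n (x : 'cV[R]_n) : x != 0 -> 0 < enorm x.
Proof. by move=> x0; rewrite sqrtr_gt0 ip_gt0. Qed.

Lemma sqr_enorm n (x : 'cV[R]_n) : enorm x ^+ 2 = ip x x.
Proof. by rewrite sqr_sqrtr // ip_ge0. Qed.

Lemma coord_le_enorm n (x : 'cV[R]_n) i : `|x i 0| <= enorm x.
Proof.
rewrite -ler_sqr ?nnegrE ?enorm_ge0 // sqr_enorm -normrX ger0_norm ?sqr_ge0 //.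
by rewrite ipE (bigD1 i) //= -expr2 lerDl sumr_ge0 // => j _; rewrite -expr2 sqr_ge0.
Qed.

Lemma enormZ n a (x : 'cV[R]_n) : 0 <= a -> enorm (a *: x) = a * enorm x.
Proof.
by move=> a0; rewrite /enorm ipZl ipZr mulrA sqrtrM ?mulr_ge0 // -expr2 sqrtr_sqr ger0_norm.
Qed.

Lemma ip_normalize n (x : 'cV[R]_n) : x != 0 ->
  let u := (enorm x)^-1 *: x in ip u u = 1 /\ x = enorm x *: u.
Proof.
move=> x0 u; have e0 := enorm_gt0 x0; split.
  by rewrite ipZl ipZr mulrA -expr2 exprVn sqr_enorm mulVf // -sqr_enorm sqrf_eq0 gt_eqF.
by rewrite /u scalerA mulfV ?gt_eqF // scale1r.
Qed.

End InnerProduct.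

Section QuadraticForm.
Variable R : realType.
Implicit Types n : nat.

Lemma ip_mulmx_sym n (A : 'M[R]_n) x y : A^T = A -> ip x (A *m y) = ip y (A *m x).
Proof. by move=> sA; rewrite ip_trmx sA ipC. Qed.

Lemma sqnormVD n (A : 'M[R]_n) x y : A^T = A ->
  sqnormV A (x + y) = sqnormV A x + 2 * ip x (A *m y) + sqnormV A y.
Proof. by move=> sA; rewrite /sqnormV /ipV mulmxDr !ipDl !ipDr (ip_mulmx_sym y x sA); ring. Qed.

Lemma sqnormVB n (A : 'M[R]_n) x y : A^T = A ->
  sqnormV A (x - y) = sqnormV A x - 2 * ip x (A *m y) + sqnormV A y.
Proof. by move=> sA; rewrite /sqnormV /ipV mulmxBr !ipBl !ipBr (ip_mulmx_sym y x sA); ring. Qed.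

Lemma sqnormVZ n (A : 'M[R]_n) a x : sqnormV A (a *: x) = a ^+ 2 * sqnormV A x.
Proof. by rewrite /sqnormV /ipV -scalemxAr ipZl ipZr mulrA expr2. Qed.

Lemma sqnormV_addmx n (A B : 'M[R]_n) x : sqnormV (A + B) x = sqnormV A x + sqnormV B x.
Proof. by rewrite /sqnormV /ipV mulmxDl ipDr. Qed.

Lemma sqnormV_submx n (A B : 'M[R]_n) x : sqnormV (A - B) x = sqnormV A x - sqnormV B x.
Proof. by rewrite /sqnormV /ipV mulmxBl ipBr. Qed.

Lemma sqnormV_scalar n a (x : 'cV[R]_n) : sqnormV a%:M x = a * ip x x.
Proof. by rewrite /sqnormV /ipV mul_scalar_mx ipZr. Qed.

Lemma sqnormV_rank1 n (v x : 'cV[R]_n) : sqnormV (v *m v^T) x = ip v x ^+ 2.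
Proof. by rewrite /sqnormV /ipV -mulmxA trmx_ip mul_mx_scalar ipZr ipC expr2. Qed.

Lemma sqnormV_bound n (A : 'M[R]_n) :
  exists2 C, 0 < C & forall x, `|sqnormV A x| <= C * ip x x.
Proof.
exists (1 + \sum_i \sum_j `|A i j|).
  by rewrite ltr_pwDl // sumr_ge0 // => i _; rewrite sumr_ge0.
move=> x; rewrite /sqnormV /ipV ipE (le_trans (ler_norm_sum _ _ _)) //.
rewrite mulrDl mul1r ler_wpDl ?ip_ge0 // mulr_suml ler_sum // => i _.
rewrite mxE mulr_sumr mulr_suml (le_trans (ler_norm_sum _ _ _)) // ler_sum // => j _.
rewrite mulrCA !normrM -sqr_enorm expr2 ler_wpM2l //.
by rewrite ler_pM ?coord_le_enorm.
Qed.

Lemma sqnormV_scalemx n a (A : 'M[R]_n) x : sqnormV (a *: A) x = a * sqnormV A x.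
Proof. by rewrite /sqnormV /ipV -scalemxAl ipZr. Qed.

End QuadraticForm.

Section PositiveDefinite.
Variable R : realType.
Implicit Types n : nat.

Lemma spd_psd n (A : 'M[R]_n) : spd A -> psd A.
Proof.
case=> sA A_gt0; split=> // x; have [->|x0] := eqVneq x 0; first by rewrite ip0l.
exact/ltW/A_gt0.
Qed.

Lemma kermx_nonunit n (A : 'M[R]_n) : A \notin unitmx ->
  exists2 v : 'cV[R]_n, v != 0 & A *m v = 0.
Proof.
rewrite -unitmx_tr unitmxE unitfE negbK => /det0P[w w0 wA].
by exists w^T; [rewrite trmx_eq0 | rewrite -[A]trmxK -trmx_mul wA trmx0].
Qed.

Lemma spd_unit n (A : 'M[R]_n) : spd A -> A \in unitmx.
Proof.
case=> _ A_gt0; apply/negPn/negP => /kermx_nonunit[v v0 Av].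
by have := A_gt0 v v0; rewrite Av ip0r ltxx.
Qed.

Lemma sym_sqnormV_eq0 n (A : 'M[R]_n) : A^T = A -> (forall x, sqnormV A x = 0) -> A = 0.
Proof.
move=> sA q0; have cross x y : ip x (A *m y) = 0.
  by have := sqnormVD x y sA; rewrite !q0; lra.
apply/matrixP => i j; have /eqP := cross (A *m delta_mx j 0) (delta_mx j 0).
by rewrite ip_eq0 -colE => /eqP/matrixP/(_ i 0); rewrite !mxE.
Qed.

Lemma psd_coercive n (A : 'M[R]_n) : psd A -> A \in unitmx ->
  exists2 C, 0 < C & forall x, ip x x <= C * sqnormV A x.
Proof.
move=> [sA A_ge0] uA; have [C C0 hC] := sqnormV_bound (invmx A).
exists C => // x; set y := invmx A *m x; set t := C^-1.
have Ay : A *m y = x by rewrite mulKVmx.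
have qy : t ^+ 2 * sqnormV A y <= t * ip x x.
  rewrite /sqnormV /ipV Ay ipC expr2 -mulrA ler_wpM2l ?invr_ge0 ?(ltW C0) //.
  by rewrite /t ler_pdivrMl // (le_trans (ler_norm _)) ?hC.
(* Nonnegativity of the form at [x - t A^-1 x] with [t = 1/C]. *)
have : 0 <= sqnormV A (x - t *: y) := A_ge0 _.
rewrite sqnormVB // sqnormVZ -scalemxAr Ay ipZr => h.
have : 0 <= C * (sqnormV A x - t * ip x x) by apply: mulr_ge0; [exact: ltW | lra].
by rewrite mulrBr mulrA divff ?gt_eqF // mul1r subr_ge0.
Qed.

End PositiveDefinite.

Section SquareRoot.
Variable R : realType.
Implicit Types n : nat.

Lemma sym_max_eigen n (B : 'M[R]_n.+1) : B^T = B ->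
  exists mu (v : 'cV[R]_n.+1),
    [/\ ip v v = 1, B *m v = mu *: v & forall x, sqnormV B x <= mu * ip x x].
Proof.
move=> sB; pose E : set R := fun q => exists2 x, ip x x = 1 & q = sqnormV B x.
have [C C0 hC] := sqnormV_bound B.
have supE : has_sup E.
  split; first by exists (sqnormV B (delta_mx 0 0)), (delta_mx 0 0);
    rewrite // /ip trmx_delta mul_delta_mx mxE.
  exists C => _ [x x1 ->]; rewrite -[C]mulr1 -x1.
  exact: le_trans (ler_norm _) (hC x).
set mu := sup E.
have mu_ub x : sqnormV B x <= mu * ip x x.
  have [->|x0] := eqVneq x 0; first by rewrite /sqnormV /ipV !ip0l mulr0.
  have [u1 ->] := ip_normalize x0; set u := _ *: x in u1 *.
  rewrite sqnormVZ ipZl ipZr u1 mulr1 mulrC ler_wpM2r ?sqr_ge0 //.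
  exact: sup_upper_bound supE _ (ex_intro2 _ _ u u1 erefl).
pose A := mu%:M - B.
have psdA : psd A.
  split=> [|x]; first by rewrite /A linearB /= tr_scalar_mx sB.
  by change (0 <= sqnormV (mu%:M - B) x); rewrite sqnormV_submx sqnormV_scalar subr_ge0.
(* An invertible [mu - B] would be coercive, so [mu - 1/C'] would bound the
   Rayleigh quotient, contradicting that [mu] is its supremum. *)
have /kermx_nonunit[v v0 Av] : A \notin unitmx.
  apply/negP => /(psd_coercive psdA)[C' C'0 hC'].
  have iC'0 : 0 < C'^-1 by rewrite invr_gt0.
  have [_ [x x1 ->]] := sup_adherent iC'0 supE.
  rewrite -/mu ltrBlDr -ltrBlDl -(ltr_pM2l C'0) mulfV ?gt_eqF // => lt1.
  by have := hC' x; rewrite x1 sqnormV_submx sqnormV_scalar x1 mulr1 leNgt lt1.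
have [u1 _] := ip_normalize v0; set u := _ *: v in u1.
exists mu, u; split => //; apply/esym/eqP.
by rewrite -subr_eq0 -mul_scalar_mx -mulmxBl /u -scalemxAr Av scaler0.
Qed.

Lemma psd_eigen_pos n (A : 'M[R]_n) : psd A -> A != 0 ->
  exists mu (v : 'cV[R]_n), [/\ 0 < mu, ip v v = 1 & A *m v = mu *: v].
Proof.
case: n A => [|n] A [sA A_ge0] A0; first by rewrite thinmx0 eqxx in A0.
have [mu [v [v1 Av mu_max]]] := sym_max_eigen sA.
exists mu, v; split => //; rewrite lt_def.
have -> : 0 <= mu by have := A_ge0 v; rewrite Av ipZr v1 mulr1.
rewrite andbT; apply: contra_neq A0 => mu0.
apply: (sym_sqnormV_eq0 sA) => x; apply/eqP.
by rewrite eq_le A_ge0 andbT; have := mu_max x; rewrite mu0 mul0r.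
Qed.

Lemma deflate_ker n (A : 'M[R]_n) mu v : ip v v = 1 -> A *m v = mu *: v ->
  (A - mu *: (v *m v^T)) *m v = 0.
Proof. by move=> v1 Av; rewrite mulmxBl -scalemxAl -mulmxA trmx_ip v1 mulmx1 Av subrr. Qed.

Lemma psd_deflate n (A : 'M[R]_n) mu v : psd A -> ip v v = 1 -> A *m v = mu *: v ->
  psd (A - mu *: (v *m v^T)).
Proof.
move=> [sA A_ge0] v1 Av; split; first by rewrite linearB linearZ /= trmx_mul trmxK sA.
move=> x; change (0 <= sqnormV (A - mu *: (v *m v^T)) x).
rewrite sqnormV_submx sqnormV_scalemx sqnormV_rank1.
set a := ip v x; set w := x - a *: v.
have vw : ip v w = 0 by rewrite ipBr ipZr v1 mulr1 subrr.
have cross : ip (a *: v) (A *m w) = 0.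
  by rewrite (ip_mulmx_sym _ _ sA) -scalemxAr Av scalerA ipZr ipC vw mulr0.
have qv : sqnormV A v = mu by rewrite /sqnormV /ipV Av ipZr v1 mulr1.
have -> : x = a *: v + w by rewrite addrC subrK.
rewrite sqnormVD // sqnormVZ qv cross mulr0 addr0.
have : 0 <= sqnormV A w := A_ge0 w.
lra.
Qed.

Lemma rank_deflate n (A : 'M[R]_n) mu v : A^T = A -> ip v v = 1 -> A *m v = mu *: v ->
  mu != 0 -> (\rank (A - mu *: (v *m v^T))%R < \rank A)%N.
Proof.
move=> sA v1 Av mu0; set A' := _ - _.
have vA : v^T *m A = mu *: v^T by rewrite -[A]sA -trmx_mul Av linearZ.
have A'E : A' = (1%:M - v *m v^T) *m A.
  by rewrite mulmxBl mul1mx -mulmxA vA -scalemxAr.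
(* The rows of [A'] lie in the row space of [A]; the converse fails because
   [A'] annihilates [v] and [A] does not. *)
rewrite rank_ltmx // ltmxE {1}A'E submxMl /=; apply/negP => /submxP[X AX].
have : A *m v = 0 by rewrite [in LHS]AX -mulmxA (deflate_ker v1 Av) mulmx0.
rewrite Av => /eqP; rewrite scaler_eq0 (negbTE mu0) /= => /eqP v0.
by move: v1; rewrite v0 ip0l => /eqP; rewrite eq_sym oner_eq0.
Qed.

Lemma psd_sqrt_add_rank1 n (S : 'M[R]_n) mu v :
  psd S -> S *m v = 0 -> ip v v = 1 -> 0 <= mu ->
  let S' := S + Num.sqrt mu *: (v *m v^T) in
  psd S' /\ S' *m S' = S *m S + mu *: (v *m v^T).
Proof.
move=> [sS S_ge0] Sv v1 mu0 S'; split; first split.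
- by rewrite linearD linearZ /= trmx_mul trmxK sS.
- move=> x; have Sx : 0 <= sqnormV S x := S_ge0 x.
  change (0 <= sqnormV S' x); rewrite sqnormV_addmx sqnormV_scalemx sqnormV_rank1.
  by apply: addr_ge0 => //; rewrite mulr_ge0 ?sqrtr_ge0 ?sqr_ge0.
have SP : S *m (v *m v^T) = 0 by rewrite mulmxA Sv mul0mx.
have PS : v *m v^T *m S = 0 by rewrite -mulmxA -[S]sS -trmx_mul Sv trmx0 mulmx0.
have PP : v *m v^T *m (v *m v^T) = v *m v^T.
  by rewrite mulmxA -(mulmxA v) trmx_ip v1 mulmx1.
rewrite /S' mulmxDl !mulmxDr -scalemxAr SP scaler0 addr0 -scalemxAl PS scaler0.
by rewrite add0r -scalemxAl -scalemxAr PP scalerA -expr2 sqr_sqrtr.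
Qed.

Lemma psd_sqrt n (A : 'M[R]_n) : psd A -> exists S, psd S /\ S *m S = A.
Proof.
have [k] := ubnP (\rank A); elim: k A => // k IHk A rkA psdA.
have [->|A0] := eqVneq A 0.
  exists 0; split; last by rewrite mul0mx.
  by split=> [|x]; rewrite ?trmx0 // mul0mx ip0r.
have [mu [v [mu0 v1 Av]]] := psd_eigen_pos psdA A0.
have [|S [psdS SS]] := IHk _ _ (psd_deflate psdA v1 Av).
  by rewrite ltnS in rkA; exact: leq_trans (rank_deflate psdA.1 v1 Av (lt0r_neq0 mu0)) rkA.
have Sv : S *m v = 0.
  apply/eqP; rewrite -ip_eq0 -{1}(proj1 psdS) -ip_trmx mulmxA SS.
  by rewrite (deflate_ker v1 Av) ip0r.
have [psdS' S'S'] := psd_sqrt_add_rank1 psdS Sv v1 (ltW mu0).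
by eexists; split; [exact: psdS' | rewrite S'S' SS subrK].
Qed.

Lemma sqrtmxP n (A : 'M[R]_n) : psd A -> psd (sqrtmx A) /\ sqrtmx A *m sqrtmx A = A.
Proof. by move=> /psd_sqrt; apply: epsilon_spec. Qed.

End SquareRoot.

Section Gradient.
Variable R : realType.

Lemma is_gradient_unique n (F : 'cV[R]_n -> R) x v w :
  is_gradient F x v -> is_gradient F x w -> v = w.
Proof.
move=> Fv Fw; apply/eqP; rewrite -subr_eq0; apply: contraT => e0.
have a0 := enorm_gt0 e0; set e := v - w in e0 a0 *.
have eps0 : 0 < enorm e / 4 by rewrite divr_gt0.
have [d1 d10 h1] := Fv _ eps0; have [d2 d20 h2] := Fw _ eps0.
set d := Num.min d1 d2; have d0 : 0 < d by rewrite lt_min d10 d20.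
set t := d / (2 * enorm e); have t0 : 0 < t by rewrite divr_gt0 ?mulr_gt0.
have nh : enorm (t *: e) = d / 2 by rewrite (enormZ _ (ltW t0)) /t; field; rewrite gt_eqF.
have hd : d / 2 < d by rewrite ltr_pdivrMr // ltr_pMr // ltr1n.
have [hd1 hd2] : enorm (t *: e) < d1 /\ enorm (t *: e) < d2.
  by apply/andP; rewrite -lt_min nh.
set h := t *: e; set A := F (x + h) - F x.
have eh : ip e h = (A - ip w h) - (A - ip v h) by rewrite ipBl; ring.
have : `|ip e h| <= enorm e / 4 * enorm h + enorm e / 4 * enorm h.
  by rewrite eh (le_trans (ler_normB _ _)) // lerD ?h1 ?h2.
have ta : 0 < t * enorm e ^+ 2 by rewrite mulr_gt0 ?exprn_gt0.
rewrite /h ipZr (enormZ _ (ltW t0)) -sqr_enorm gtr0_norm //.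
lra.
Qed.

End Gradient.

Section QuadraticFunction.
Variables (R : realType) (N : nat) (f : 'cV[R]_N -> R) (H : 'M[R]_N) (b : 'cV[R]_N) (c : R).
Hypothesis sH : H^T = H.
Hypothesis fE : forall x, f x = 2^-1 * sqnormV H x + ip b x + c.

Lemma quad_expand y w : f (y + w) = f y + ip (H *m y + b) w + 2^-1 * sqnormV H w.
Proof. by rewrite !fE sqnormVD // ipDr ipDl (ip_trmx H) sH; lra. Qed.

Lemma quad_gradient y : is_gradient f y (H *m y + b).
Proof.
move=> eps eps0; have [C C0 hC] := sqnormV_bound H.
exists (2 * eps / C) => [|h hd]; first by rewrite divr_gt0 ?mulr_gt0.
have -> : f (y + h) - f y - ip (H *m y + b) h = 2^-1 * sqnormV H h.
  by rewrite quad_expand; ring.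
have hb : C * enorm h ^+ 2 <= 2 * eps * enorm h.
  have -> : 2 * eps * enorm h = C * enorm h * (2 * eps / C) by field; rewrite gt_eqF.
  by rewrite expr2 mulrA ler_wpM2l ?mulr_ge0 ?enorm_ge0 ?(ltW C0) ?(ltW hd).
have := hC h; rewrite -sqr_enorm normrM gtr0_norm ?invr_gt0 //.
lra.
Qed.

Lemma quad_linearization x z (T : 'M[R]_N) :
  f z + ip (H *m z + b) (x - z) + 2^-1 * sqnormV T (x - z) =
  f x + 2^-1 * sqnormV (T - H) (x - z).
Proof.
by rewrite -[in f x](subrKC z x) quad_expand sqnormV_submx; lra.
Qed.

End QuadraticFunction.

Section LinearAlgebra.
Variable R : realType.

Lemma invmx_right n (A B : 'M[R]_n) : A *m B = 1%:M -> invmx A = B.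
Proof.
move=> AB; have [uA _] := mulmx1_unit AB.
by rewrite -[RHS]mul1mx -(mulVmx uA) -mulmxA AB mulmx1.
Qed.

Lemma spd_congruence m n (M : 'M[R]_m) (D : 'M[R]_(m, n)) :
  spd M -> \rank D = n -> spd (D^T *m M *m D).
Proof.
move=> [sM M_gt0] rkD; split; first by rewrite !trmx_mul trmxK sM mulmxA.
have /row_fullP[B BD] : row_full D by rewrite /row_full rkD.
move=> x x0; rewrite -!mulmxA ip_trmx trmxK M_gt0 //.
by apply: contra x0 => /eqP Dx; rewrite -[x]mul1mx -BD -mulmxA Dx mulmx0.
Qed.

Lemma gram_isqrt n m (S K : 'M[R]_n) (A : 'M[R]_(n, m)) :
  S^T = S -> S *m S = K -> K \in unitmx ->
  (invmx S *m A)^T *m (invmx S *m A) = A^T *m invmx K *m A.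
Proof.
move=> sS SS uK; have uS : S \in unitmx by move: uK; rewrite -SS unitmx_mul => /andP[].
have -> : invmx K = invmx S *m invmx S.
  by apply: invmx_right; rewrite -SS mulmxA mulmxK ?mulmxV.
by rewrite trmx_mul trmx_inv sS !mulmxA.
Qed.

Lemma sqnormV_complete_square n (Q : 'M[R]_n) u g : Q^T = Q -> Q \in unitmx ->
  sqnormV Q (u + invmx Q *m g) = sqnormV Q u + 2 * ip u g + ip (invmx Q *m g) g.
Proof. by move=> sQ uQ; rewrite sqnormVD // /sqnormV /ipV !mulKVmx. Qed.

Lemma mxrank_gram_unit m n (U : 'M[R]_(m, n)) (D : 'M[R]_(n, m)) :
  U *m D \in unitmx -> \rank (U^T *m U) = m.
Proof.
move=> uUD; apply/eqP; rewrite eqn_leq (leq_trans (mxrankM_maxr _ _) (rank_leq_row U)) /=.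
have rk : \rank ((U *m D)^T *m (U *m D)) = m by rewrite mxrank_unit // unitmx_mul unitmx_tr uUD.
rewrite -[leqLHS]rk.
by rewrite trmx_mul -mulmxA (mulmxA U^T) (leq_trans (mxrankM_maxr _ _)) ?mxrankM_maxl.
Qed.

Lemma woodbury n m (T : 'M[R]_n) (U : 'M[R]_(m, n)) :
  T \in unitmx -> T - U^T *m U \in unitmx ->
  let W := 1%:M - U *m invmx T *m U^T in
  W \in unitmx /\
  invmx (T - U^T *m U) = invmx T + invmx T *m U^T *m invmx W *m U *m invmx T.
Proof.
move=> uT uQ W; set Q := T - U^T *m U.
have WU : W *m U = U *m invmx T *m Q.
  by rewrite /W /Q mulmxBl mul1mx mulmxBr mulmxKV // !mulmxA.
have WX : W *m (1%:M + U *m invmx Q *m U^T) = 1%:M.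
  by rewrite mulmxDr mulmx1 !mulmxA WU mulmxK // /W subrK.
have uW : W \in unitmx by case: (mulmx1_unit WX).
split=> //; rewrite (invmx_right WX); apply: invmx_right.
have QTi : Q *m invmx T = 1%:M - U^T *m U *m invmx T by rewrite /Q mulmxBl mulmxV.
have QTiU : Q *m invmx T *m U^T = U^T *m W.
  by rewrite QTi mulmxBl mul1mx /W mulmxBr mulmx1 !mulmxA.
by rewrite mulmxDr QTi !mulmxA QTiU -(mulmxA U^T W) WX mulmx1 subrK.
Qed.

End LinearAlgebra.

Section LeastSquares.
Variables (R : realType) (N r : nat) (M : 'M[R]_N) (D : 'M[R]_(N, r)).
Let K := D^T *m M *m D.
Hypotheses (sM : M^T = M) (uK : K \in unitmx).
Let lsq (u : 'cV[R]_N) := invmx K *m D^T *m M *m u.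

Lemma lsq_normal_eq u : D^T *m M *m (u - D *m lsq u) = 0.
Proof. by rewrite mulmxBr /lsq !mulmxA -/K mulmxV // mul1mx subrr. Qed.

Lemma lsq_pythagoras u beta :
  sqnormV M (u - D *m beta) = sqnormV M (u - D *m lsq u) + sqnormV K (beta - lsq u).
Proof.
have -> : u - D *m beta = (u - D *m lsq u) - D *m (beta - lsq u).
  by rewrite mulmxBr opprB addrA subrK.
rewrite sqnormVB // mulmxA ip_trmx trmx_mul sM lsq_normal_eq ip0l mulr0 subr0.
by congr (_ + _); rewrite /sqnormV /ipV ip_trmxl !mulmxA.
Qed.

Lemma lsq_residual u :
  sqnormV M (u - D *m lsq u) = sqnormV M u - sqnormV (M *m D *m invmx K *m D^T *m M) u.
Proof.
set z := D^T *m M *m u.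
have MDt : (M *m D)^T = D^T *m M by rewrite trmx_mul sM.
have lsqE : lsq u = invmx K *m z by rewrite /lsq /z !mulmxA.
have cross : ip u (M *m (D *m lsq u)) = ip z (lsq u) by rewrite mulmxA ip_trmx MDt.
have quad : sqnormV M (D *m lsq u) = ip z (lsq u).
  by rewrite /sqnormV /ipV ip_trmxl lsqE !mulmxA -/K mulmxV // mul1mx ipC.
have gram : sqnormV (M *m D *m invmx K *m D^T *m M) u = ip z (lsq u).
  by rewrite /sqnormV /ipV -!mulmxA (mulmxA M D) ip_trmx MDt lsqE /z !mulmxA.
by rewrite sqnormVB // cross quad gram; lra.
Qed.

End LeastSquares.

Lemma is_argmin_marginal (R : realType) (X B : Type) (Phi : X * B -> \bar R)
    (Psi : X -> \bar R) (bstar : X -> B) (C : R) :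
  (forall x, is_argmin (fun b => Phi (x, b)) (bstar x)) ->
  (forall x, Phi (x, bstar x) = (Psi x + C%:E)%E) ->
  forall x, (exists b, is_argmin Phi (x, b)) <-> is_argmin Psi x.
Proof.
move=> bmin Phi_bstar x; split.
- move=> [b hb] z; rewrite -(@leeD2rE _ C%:E) // -!Phi_bstar.
  exact: le_trans (bmin x b) (hb (z, bstar z)).
- move=> hx; exists (bstar x) => -[z b].
  by rewrite Phi_bstar (le_trans _ (bmin z b)) // Phi_bstar leeD2r.
Qed.

Section ProximalStep.
Variables (R : realType) (N r : nat) (g : 'cV[R]_N -> \bar R) (f : 'cV[R]_N -> R).
Variables (df : 'cV[R]_N -> 'cV[R]_N) (H T : 'M[R]_N) (b xk : 'cV[R]_N) (c : R).
Variable D : 'M[R]_(N, r).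
Hypothesis fE : forall x, f x = 2^-1 * sqnormV H x + ip b x + c.
Hypothesis dfE : forall z, df z = H *m z + b.

Let M := T - H.
Let K := D^T *m M *m D.
Hypotheses (spdH : spd H) (sT : T^T = T) (spdM : spd M) (spdK : spd K).
Let y (beta : 'cV[R]_r) := xk + D *m beta.
Let ell x z := (g x + (f z + ip (df z) (x - z))%:E)%E.
Let Phi (xb : 'cV[R]_N * 'cV[R]_r) :=
  (ell xb.1 (y xb.2) + (2^-1 * sqnormV T (xb.1 - y xb.2))%:E)%E.
Let betastar (x : 'cV[R]_N) := invmx K *m D^T *m M *m (x - xk).
Let U := isqrtmx K *m D^T *m M.
Let Q := T - U^T *m U.
Let Psi x := (g x + (2^-1 * sqnormV Q (x - xk + invmx Q *m df xk))%:E)%E.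

Let sH : H^T = H := proj1 spdH.
Let sM : M^T = M := proj1 spdM.
Let uK : K \in unitmx := spd_unit spdK.

Lemma PhiE x beta :
  Phi (x, beta) = (g x + (f x + 2^-1 * sqnormV M (x - xk - D *m beta))%:E)%E.
Proof. by rewrite /Phi /ell /y /= -addeA -EFinD dfE (quad_linearization sH fE) opprD addrA. Qed.

Lemma betastar_argmin x : is_argmin (fun beta => Phi (x, beta)) (betastar x).
Proof.
move=> beta; rewrite !PhiE; apply: leeD2l; rewrite lee_fin lerD2l.
apply: ler_wpM2l; first by rewrite invr_ge0 ler0n.
by rewrite [leRHS](lsq_pythagoras sM uK) lerDl; apply: (spd_psd spdK).2.
Qed.

Lemma UtUE : U^T *m U = M *m D *m invmx K *m D^T *m M.
Proof.
have [[sS _] SS] := sqrtmxP (spd_psd spdK).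
by rewrite /U -mulmxA (gram_isqrt _ sS SS uK) trmx_mul trmxK sM !mulmxA.
Qed.

Lemma spd_Q : spd Q.
Proof.
split=> [|x x0]; first by rewrite /Q linearB /= trmx_mul trmxK sT.
change (0 < sqnormV Q x); rewrite /Q sqnormV_submx UtUE.
have qM : sqnormV M x = sqnormV T x - sqnormV H x := sqnormV_submx _ _ _.
rewrite -[sqnormV T x](subrK (sqnormV H x)) -qM addrAC -(lsq_residual sM uK).
exact: ltr_wpDl ((spd_psd spdM).2 _) (spdH.2 x x0).
Qed.

Lemma Phi_betastarE x :
  Phi (x, betastar x) = (Psi x + (f xk - 2^-1 * ip (invmx Q *m df xk) (df xk))%:E)%E.
Proof.
rewrite PhiE /Psi -addeA -EFinD; congr (_ + _%:E)%E.
have [sQ _] := spd_Q; have uQ := spd_unit spd_Q.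
rewrite (lsq_residual sM uK) -[in f x](subrKC xk x) (quad_expand sH fE) -dfE.
rewrite sqnormV_complete_square // /Q sqnormV_submx UtUE /K /M sqnormV_submx ipC.
lra.
Qed.

Lemma Phi_argmin x : (exists beta, is_argmin Phi (x, beta)) <-> is_argmin Psi x.
Proof. exact: is_argmin_marginal betastar_argmin Phi_betastarE x. Qed.

Lemma rank_UtU : \rank (U^T *m U) = r.
Proof.
have [_ SS] := sqrtmxP (spd_psd spdK).
have /andP[uS _] : (sqrtmx K \in unitmx) && (sqrtmx K \in unitmx).
  by rewrite -unitmx_mul SS.
apply: (@mxrank_gram_unit _ _ _ _ D).
have -> : U *m D = isqrtmx K *m K by rewrite /U /K !mulmxA.
by rewrite unitmx_mul unitmx_inv uS.
Qed.

End ProximalStep.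

Unset Implicit Arguments.

Theorem mainTheorem1 (R : realType) (N r : nat)
  (g : 'cV[R]_N -> \bar R) (f : 'cV[R]_N -> R) (df : 'cV[R]_N -> 'cV[R]_N)
  (L H T : 'M[R]_N) (b xk : 'cV[R]_N) (c : R) (D : 'M[R]_(N, r)) :
  proper_fun g -> lsc g ->
  C1_with_gradient f df ->
  spd L ->
  (exists dfL : 'cV[R]_N -> 'cV[R]_N,
      (forall z, is_gradient (fun z => f (isqrtmx L *m z)) z (dfL z)) /\
      lipschitz1 dfL) ->
  (exists m : R, forall x, (m%:E <= g x + (f x)%:E)%E) ->
  spd H ->
  (forall x, f x = 2^-1 * ip x (H *m x) + ip b x + c) ->
  \rank D = r ->
  spd T -> spd (T - H) ->
  let M := T - H in
  let y := fun beta : 'cV[R]_r => xk + D *m beta in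
  let ell := fun x y => (g x + (f y + ip (df y) (x - y))%:E)%E in
  let Phi := fun (xb : 'cV[R]_N * 'cV[R]_r) =>
     (ell xb.1 (y xb.2) + (2^-1 * sqnormV T (xb.1 - y xb.2))%:E)%E in
  let betastar := fun x =>
     invmx (D^T *m M *m D) *m D^T *m M *m (x - xk) in
  let U := isqrtmx (D^T *m M *m D) *m D^T *m M in
  let Q := T - U^T *m U in
  (forall x, is_argmin (fun beta => Phi (x, beta)) (betastar x)) /\
  (forall x, (exists beta, is_argmin Phi (x, beta)) <->
     is_argmin (fun x => (g x +
        (2^-1 * sqnormV Q (x - xk + invmx Q *m df xk))%:E)%E) x) /\
  spd Q /\
  \rank (U^T *m U) = r /\
  (1%:M - U *m invmx T *m U^T) \in unitmx /\
  invmx Q = invmx T + invmx T *m U^T *m invmx (1%:M - U *m invmx T *m U^T)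
              *m U *m invmx T.
Proof.
move=> _ _ [grad_f _] _ _ _ spdH fE rkD spdT spdM M y ell Phi betastar U Q.
have dfE z : df z = H *m z + b.
  exact: is_gradient_unique (grad_f z) (quad_gradient spdH.1 fE z).
have spdK := spd_congruence spdM rkD.
have spdQ := spd_Q spdH spdT.1 spdM spdK.
split; first exact: (betastar_argmin _ _ fE dfE spdH spdM spdK).
split; first exact: (Phi_argmin _ _ fE dfE spdH spdT.1 spdM spdK).
split=> //; split; first exact: rank_UtU spdK.
exact: woodbury (spd_unit spdT) (spd_unit spdQ).
Qed.
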